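(* Let $H$ be obtained from a graph $G$ on vertices $v_1,\dots,v_k$ by expanding each $v_i$ by the graph $M_i$. Then the number of minimal separators of $H$ is at most the number of minimal separators of $G$ plus $\sum_{i=1}^k$ (number of minimal separators of $M_i$).
   Context: Expansion: given a graph $G$ on vertices $v_1,\dots,v_k$ and pairwise disjoint graphs $M_i=(V_i,E_i)$, the graph $H$ obtained by expanding each $v_i$ by $M_i$ has vertex set $V_1\cup\dots\cup V_k$ and edge set $E_1\cup\dots\cup E_k\cup\{ab \mid a\in V_i, b\in V_j, v_iv_j\in E(G)\}$. A minimal separator is a set $S$ that, for some vertices $u,v$, separates $u$ from $v$ and is inclusion-minimal with this property. *)

From mathcomp Require Import all_boot.
Set Implicit Arguments. Unset Strict Implicit. Unset Printing Implicit Defensive.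

Definition simple_graph (T : finType) (e : rel T) : Prop :=
  symmetric e /\ irreflexive e.

Definition avoid_rel (T : finType) (e : rel T) (S : {set T}) : rel T :=
  [rel x y | [&& e x y, x \notin S & y \notin S]].

Definition separates (T : finType) (e : rel T) (S : {set T}) (u v : T) : bool :=
  [&& u \notin S, v \notin S & ~~ connect (avoid_rel e S) u v].

Definition minimal_uv_separator (T : finType) (e : rel T) (S : {set T}) (u v : T) : bool :=
  separates e S u v && [forall S' : {set T}, (S' \proper S) ==> ~~ separates e S' u v].

Definition minimal_separator (T : finType) (e : rel T) (S : {set T}) : bool :=
  [exists u, exists v, minimal_uv_separator e S u v].

Definition num_minimal_separators (T : finType) (e : rel T) : nat :=
  #|[set S : {set T} | minimal_separator e S]|.

(* Expansion of G (vertex type V) where vertex i is replaced by graph (T i, eM i).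
   Vertices of H are dependent pairs (i, x) with x : T i. *)
Definition expansion (V : finType) (eG : rel V) (T : V -> finType)
  (eM : forall i, rel (T i)) : rel {i : V & T i} :=
  [rel a b | ((tag a == tag b) && eM (tag a) (tagged a) (tagged_as a b))
             || eG (tag a) (tag b)].

(** A minimal separator S of the expansion H separates two vertices u, v.
    If u and v lie in different blocks, then the set of blocks swallowed
    entirely by S separates their blocks in G; any minimal separator K of G
    inside it blows up to a separator of u and v contained in S, so by
    minimality S is the blow-up of K.  If u and v lie in the same block M_i,
    then S contains every block adjacent to i, and the vertices of M_i in S
    form a set X separating u from v inside M_i; minimality of S forces S to
    be the union of the neighbouring blocks and X, with X a minimal
    separator of M_i.  Hence S ↦ K and S ↦ (i, X) inject the minimal
    separators of H into those of G and of the M_i. *)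
From mathcomp Require Import all_boot.
Set Implicit Arguments. Unset Strict Implicit. Unset Printing Implicit Defensive.

Lemma leq_card_bigcup (I U : finType) (F : I -> {set U}) :
  #|\bigcup_(i : I) F i| <= \sum_(i : I) #|F i|.
Proof.
apply: (big_ind2 (fun (A : {set U}) n => #|A| <= n)) => [|A1 n1 A2 n2 h1 h2|//].
  by rewrite cards0.
by apply: leq_trans (leq_add h1 h2); rewrite cardsU leq_subr.
Qed.

Section MinimalSeparators.
Variables (U : finType) (e : rel U).

Lemma minimal_uv_separator_sub (J : {set U}) a b : separates e J a b ->
  exists2 K : {set U}, K \subset J & minimal_uv_separator e K a b.
Proof.
move=> sepJ.
have [K /minsetP [sepK minK] KJ] :=
  @minset_exists _ (fun K : {set U} => separates e K a b) J sepJ.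
exists K => //; rewrite /minimal_uv_separator sepK /=.
apply/forallP => S'; apply/implyP => pS'; apply/negP => sepS'.
have eqK := minK S' sepS' (proper_sub pS').
by rewrite eqK properxx in pS'.
Qed.

Lemma minimal_uv_separator_eq (S S' : {set U}) a b :
  minimal_uv_separator e S a b -> S' \subset S -> separates e S' a b -> S' = S.
Proof.
case/andP => _ /forallP minS; rewrite subEproper => /orP [/eqP // | pS'] sepS'.
by have := minS S'; rewrite pS' sepS'.
Qed.

Lemma minimal_uv_separatorW (S : {set U}) a b :
  minimal_uv_separator e S a b -> minimal_separator e S.
Proof. by move=> minS; apply/existsP; exists a; apply/existsP; exists b. Qed.

End MinimalSeparators.

Section Expansion.
Variables (V : finType) (eG : rel V) (T : V -> finType) (eM : forall i, rel (T i)).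
Hypothesis (symG : symmetric eG) (irrG : irreflexive eG).
Local Notation vertex := {i : V & T i}.
Local Notation eH := (expansion eG eM).

Definition blocks (K : {set V}) : {set vertex} := [set z | tag z \in K].

Definition block_nbhd (i : V) : {set vertex} := [set z | eG i (tag z)].

Definition nbhd_block_sep i (Y : {set T i}) : {set vertex} :=
  block_nbhd i :|: Tagged T @: Y.

Definition full_blocks (S : {set vertex}) : {set V} :=
  [set j | [forall x : T j, Tagged T x \in S]].

Lemma mem_nbhd_block_sep i (Y : {set T i}) x :
  (Tagged T x \in nbhd_block_sep Y) = (x \in Y).
Proof. by rewrite !inE /= irrG (mem_imset _ _ (@eq_from_Tagged _ T i)). Qed.

Lemma connect_avoid_blocks K a b : connect (avoid_rel eH (blocks K)) a b ->
  connect (avoid_rel eG K) (tag a) (tag b).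
Proof.
case/connectP => p; elim: p a => [|c p IH] a /=; first by move=> _ ->.
case/andP => /and3P [eac naK ncK] pth lst.
apply: connect_trans (IH c pth lst).
move: naK ncK; rewrite !inE => naK ncK.
case/orP: eac => [/andP [/eqP Eac _] | eGac]; first by rewrite Eac.
by apply: connect1; apply/and3P.
Qed.

Lemma connect_avoid_block i (Y : {set T i}) (R : {set vertex}) ax bx :
  (forall x, x \notin Y -> Tagged T x \notin R) ->
  connect (avoid_rel (@eM i) Y) ax bx ->
  connect (avoid_rel eH R) (Tagged T ax) (Tagged T bx).
Proof.
move=> notR /connectP [p]; elim: p ax => [|c p IH] ax /=; first by move=> _ ->.
case/andP => /and3P [eac naY ncY] pth lst.
apply: connect_trans (IH c pth lst); apply: connect1.
apply/and3P; split; [|exact: notR|exact: notR].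
by rewrite /expansion /= eqxx /= tagged_asE eac.
Qed.

Lemma connect_avoid_nbhd_block_sep i (Y : {set T i}) ux z :
  connect (avoid_rel eH (nbhd_block_sep Y)) (Tagged T ux) z ->
  exists2 zx : T i, z = Tagged T zx & connect (avoid_rel (@eM i) Y) ux zx.
Proof.
case/connectP => p; elim/last_ind: p z => [|p c IH] z /=.
  by move=> _ ->; exists ux.
rewrite rcons_path last_rcons => /andP [pth ezc] ->.
have [zx Ep conn] := IH _ pth erefl.
move: ezc; rewrite Ep; case: c => j cx /and3P [ezc nzY].
rewrite !inE negb_or => /andP [nNj ncY].
case/orP: ezc => /= [/andP [/eqP Eij] | ]; last by rewrite (negbTE nNj).
subst j; rewrite tagged_asE => ezc; exists cx => //.
apply: connect_trans conn (connect1 _); apply/and3P; split => //.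
- by rewrite -(mem_nbhd_block_sep Y).
- by apply: contra ncY; apply: imset_f.
Qed.

Lemma separates_nbhd_block_sep i (Y : {set T i}) ux vx :
  ux \notin Y -> vx \notin Y -> ~~ connect (avoid_rel (@eM i) Y) ux vx ->
  separates eH (nbhd_block_sep Y) (Tagged T ux) (Tagged T vx).
Proof.
move=> nuY nvY nconn; apply/and3P; split; rewrite ?mem_nbhd_block_sep //.
apply/negP => /connect_avoid_nbhd_block_sep [vx' /(@eq_from_Tagged _ T i) <-].
exact/negP.
Qed.

Lemma block_nbhd_sub_separator i (S : {set vertex}) (ux vx : T i) :
  separates eH S (Tagged T ux) (Tagged T vx) -> block_nbhd i \subset S.
Proof.
case/and3P => nuS nvS nconn; apply/subsetP => z; rewrite inE => eiz.
apply: contraR nconn => nzS; apply: (@connect_trans _ _ z); apply: connect1.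
  by apply/and3P; split; rewrite // /expansion /= eiz orbT.
by apply/and3P; split; rewrite // /expansion /= symG eiz orbT.
Qed.

Lemma minimal_separator_in_block i (S : {set vertex}) (ux vx : T i) :
  minimal_uv_separator eH S (Tagged T ux) (Tagged T vx) ->
  exists2 X : {set T i}, minimal_separator (@eM i) X & S = nbhd_block_sep X.
Proof.
move=> minS; have /andP [sepS _] := minS; have /and3P [nuS nvS nconn] := sepS.
pose X := [set x : T i | Tagged T x \in S].
have XS : nbhd_block_sep X \subset S.
  apply/subsetP => z /setUP [/(subsetP (block_nbhd_sub_separator sepS)) //|].
  by case/imsetP => x; rewrite inE => xS ->.
have sepX (Y : {set T i}) :
    Y \subset X -> ~~ connect (avoid_rel (@eM i) Y) ux vx -> nbhd_block_sep Y = S.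
  move=> YX nconnY; apply: minimal_uv_separator_eq minS _ _.
    by apply: subset_trans XS; rewrite setUS ?imsetS.
  apply: separates_nbhd_block_sep nconnY.
    by apply: contra nuS => /(subsetP YX); rewrite inE.
  by apply: contra nvS => /(subsetP YX); rewrite inE.
have nconnX : ~~ connect (avoid_rel (@eM i) X) ux vx.
  by apply: contra nconn; apply: connect_avoid_block => x; rewrite inE.
have SX := sepX X (subxx _) nconnX.
exists X; last by rewrite SX.
apply: (@minimal_uv_separatorW _ _ _ ux vx); apply/andP; split.
  by apply/and3P; split; rewrite ?inE.
apply/forallP => X'; apply/implyP => pX'; apply/negP => /and3P [_ _ nconnX'].
have X'X : X' = X.
  apply/setP => x; rewrite -!(mem_nbhd_block_sep _ x) SX.
  by rewrite sepX ?(proper_sub pX').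
by move: pX'; rewrite X'X properxx.
Qed.

Lemma connect_avoid_full_blocks (S : {set vertex}) u j :
  u \notin S -> connect (avoid_rel eG (full_blocks S)) (tag u) j ->
  j = tag u \/
  forall x : T j, Tagged T x \notin S -> connect (avoid_rel eH S) u (Tagged T x).
Proof.
move=> nuS /connectP [p]; elim/last_ind: p j => [|p c IH] j /=.
  by move=> _ ->; left.
rewrite rcons_path last_rcons => /andP [pth /and3P [eGc nkS _]] ->; right => x nxS.
case: (IH _ pth erefl) => [Ek | conn].
  rewrite Ek in eGc; apply: connect1.
  by apply/and3P; split; rewrite // /expansion /= eGc orbT.
move: nkS; rewrite inE negb_forall => /existsP [y nyS].
apply: connect_trans (conn y nyS) (connect1 _).
by apply/and3P; split; rewrite // /expansion /= eGc orbT.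
Qed.

Lemma minimal_separator_across_blocks (S : {set vertex}) i j
    (ux : T i) (vx : T j) :
  i != j -> minimal_uv_separator eH S (Tagged T ux) (Tagged T vx) ->
  exists2 K : {set V}, minimal_separator eG K & S = blocks K.
Proof.
move=> neij minS; have /andP [/and3P [nuS nvS nconn] _] := minS.
have sepJ : separates eG (full_blocks S) i j.
  apply/and3P; split; rewrite ?inE ?negb_forall.
  - by apply/existsP; exists ux.
  - by apply/existsP; exists vx.
  - apply/negP => connij.
    case: (connect_avoid_full_blocks nuS connij) => [Eji | conn].
      by rewrite Eji eqxx in neij.
    by move/negP: nconn; apply; apply: conn.
have [K KJ minK] := minimal_uv_separator_sub sepJ.
have sepK : separates eH (blocks K) (Tagged T ux) (Tagged T vx).
  case/andP: minK => /and3P [niK njK nconnK] _.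
  apply/and3P; split; rewrite ?inE //.
  by apply: contra nconnK => /connect_avoid_blocks.
have KS : blocks K \subset S.
  apply/subsetP => -[k x]; rewrite inE => /(subsetP KJ).
  by rewrite inE => /forallP; apply.
exists K; first exact: minimal_uv_separatorW minK.
by rewrite (minimal_uv_separator_eq minS KS sepK).
Qed.

End Expansion.

Theorem corollary2 (V : finType) (eG : rel V) (T : V -> finType)
  (eM : forall i, rel (T i)) :
  simple_graph eG -> (forall i, simple_graph (eM i)) ->
  num_minimal_separators (expansion eG eM)
    <= num_minimal_separators eG + \sum_(i : V) num_minimal_separators (eM i).
Proof.
move=> [symG irrG] _. (* the M_i need not be simple *)
pose from_G := [set blocks T K | K in [set K | minimal_separator eG K]].
pose from_M i :=
  [set nbhd_block_sep eG X | X in [set X | minimal_separator (eM i) X]].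
have cover : [set S | minimal_separator (expansion eG eM) S]
    \subset from_G :|: \bigcup_(i : V) from_M i.
  apply/subsetP => S; rewrite inE => /existsP [[i ux] /existsP [[j vx] minS]].
  have [Eij | neij] := eqVneq i j.
    subst j; have [X minX ->] := minimal_separator_in_block symG irrG minS.
    apply/setUP; right; apply/bigcupP; exists i => //.
    by apply: imset_f; rewrite inE.
  have [K minK ->] := minimal_separator_across_blocks neij minS.
  by apply/setUP; left; apply: imset_f; rewrite inE.
apply: leq_trans (subset_leq_card cover) _.
rewrite cardsU; apply: leq_trans (leq_subr _ _) _.
apply: leq_add; first exact: leq_imset_card.
apply: leq_trans (leq_card_bigcup _) _.
by apply: leq_sum => i _; apply: leq_imset_card.
Qed.
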